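(* A set $A\subseteq2^\omega$ is $\mathcal T$-clopen (i.e. $A$ is measurable, $\Phi(A)=A$ and $\Phi(2^\omega\setminus A)=2^\omega\setminus A$) if and only if $A=\Phi(B)$ for some dualistic measurable $B$, if and only if $A\in\mathrm{ran}(\Phi)$ and $A$ is dualistic. Moreover the family of $\mathcal T$-clopen sets is a proper subfamily of $\{\Phi(B): B\text{ measurable}\}\cap\boldsymbol{\Delta}^0_2$.
   Context: $2^\omega$ is the Cantor space; $N_s=\{x:s\subset x\}$; $\mu$ the coin-tossing measure with $\mu(N_s)=2^{-\mathrm{lh}(s)}$. For measurable $A$ and $x$, $\mathcal D_A(x)=\lim_n\mu(A\cap N_{x\restriction n})/\mu(N_{x\restriction n})$ when it exists; $\Phi(A)=\{x:\mathcal D_A(x)=1\}$; $\mathrm{ran}(\Phi)=\{\Phi(B):B\text{ measurable}\}$. A measurable $B$ is dualistic if $\mathcal D_B(x)$ exists and belongs to $\{0,1\}$ for every $x$. $\boldsymbol{\Delta}^0_2$: sets both $F_\sigma$ and $G_\delta$. *)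

From Stdlib Require Import Reals List Classical ClassicalEpsilon.
Open Scope R_scope.

Definition Cantor := nat -> bool.
Definition cset := Cantor -> Prop.

Definition set_eq (A B : cset) : Prop := forall x, A x <-> B x.
Definition inter (A B : cset) : cset := fun x => A x /\ B x.
Definition compl (A : cset) : cset := fun x => ~ A x.
Definition diff (A B : cset) : cset := fun x => A x /\ ~ B x.

Definition N (s : list bool) : cset :=
  fun x => forall i, (i < length s)%nat -> nth i s false = x i.

Definition restr (x : Cantor) (n : nat) : list bool := map x (seq 0 n).

(* weight of an optional basic open set: 2^{-lh s}, or 0 for "no set" *)
Definition wt (o : option (list bool)) : R :=
  match o with Some s => / 2 ^ length s | None => 0 end.

Definition admissible (A : cset) (r : R) : Prop :=
  exists f : nat -> option (list bool),
    (forall x, A x -> exists n s, f n = Some s /\ N s x) /\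
    (forall n, sum_f_R0 (fun i => wt (f i)) n <= r).

(* outer coin-tossing measure: mu*(A) = inf of admissible bounds *)
Definition outer (A : cset) : R :=
  - epsilon (inhabits 0) (is_lub (fun y => admissible A (- y))).

Definition measurable (A : cset) : Prop :=
  forall E : cset, outer E = outer (inter E A) + outer (diff E A).

Definition density_at (A : cset) (x : Cantor) (l : R) : Prop :=
  Un_cv (fun n => outer (inter A (N (restr x n))) / outer (N (restr x n))) l.

Definition Phi (A : cset) : cset := fun x => density_at A x 1.

Definition in_ran_Phi (A : cset) : Prop :=
  exists B, measurable B /\ set_eq A (Phi B).

Definition dualistic (B : cset) : Prop :=
  measurable B /\
  forall x, exists l, density_at B x l /\ (l = 0 \/ l = 1).

Definition T_clopen (A : cset) : Prop :=
  measurable A /\ set_eq (Phi A) A /\ set_eq (Phi (compl A)) (compl A).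

Definition is_open (U : cset) : Prop :=
  forall x, U x -> exists n, forall y, N (restr x n) y -> U y.
Definition is_closed (F : cset) : Prop := is_open (compl F).
Definition F_sigma (A : cset) : Prop :=
  exists F : nat -> cset, (forall n, is_closed (F n)) /\
    set_eq A (fun x => exists n, F n x).
Definition G_delta (A : cset) : Prop :=
  exists G : nat -> cset, (forall n, is_open (G n)) /\
    set_eq A (fun x => forall n, G n x).
Definition Delta02 (A : cset) : Prop := F_sigma A /\ G_delta A.

(* The coin-tossing outer measure is the infimum of weights of covers by basic
   open sets; compactness of 2^omega gives mu(N_s) = 2^-|s|, and splitting
   cylinders shows that coordinate sets, hence all N_s, are Carathéodory
   measurable.  Lebesgue's density theorem is proved with the minimal
   cylinders on which C is "thin" (fills less than the fraction q < 1): they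
   are disjoint, so inside N_u the points of C that are infinitely often thin
   have outer measure at most q * mu(N_u), which forces that set to be null.
   Consequently B and Phi(B) differ by a null set and have the same densities
   everywhere.  If B is dualistic this makes Phi(B) T-clopen; conversely a
   T-clopen A is dualistic with A = Phi(A), and it is Delta^0_2 because its
   density ratios eventually stay on one side of 1/2.  The set of sequences
   whose first 1 is at an even place is open, equal to its Phi-image and
   Delta^0_2, but at the zero sequence its complement has density ratio at
   most 1/2 infinitely often, so it is not T-clopen. *)

From Stdlib Require Import Reals List Lra Lia Classical ClassicalEpsilon Arith PArith.
From Stdlib Require Cantor.
Import ListNotations.
Open Scope R_scope.

Definition sumL {T} (h : T -> R) (l : list T) : R :=
  fold_right (fun t a => h t + a) 0 l.

Lemma sumL_app {T} (h : T -> R) l1 l2 : sumL h (l1 ++ l2) = sumL h l1 + sumL h l2.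
Proof. induction l1; simpl; [lra|]. rewrite IHl1; lra. Qed.

Lemma sumL_map {T U} (h : U -> R) (g : T -> U) l :
  sumL h (map g l) = sumL (fun t => h (g t)) l.
Proof. induction l; simpl; [lra|]. rewrite IHl; lra. Qed.

Lemma sumL_nonneg {T} (h : T -> R) l : (forall t, 0 <= h t) -> 0 <= sumL h l.
Proof. intro H; induction l; simpl; [lra|]. specialize (H a); lra. Qed.

Lemma sumL_le {T} (h g : T -> R) l : (forall t, h t <= g t) -> sumL h l <= sumL g l.
Proof. intro H; induction l; simpl; [lra|]. specialize (H a); lra. Qed.

Lemma sumL_In_le {T} (h : T -> R) l a :
  (forall t, 0 <= h t) -> In a l -> h a <= sumL h l.
Proof.
  intros H Ha; induction l as [|b l IH]; simpl in *; [contradiction|].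
  pose proof (H b). pose proof (sumL_nonneg h l H).
  destruct Ha as [<-|Ha]; [lra|]. specialize (IH Ha); lra.
Qed.

Lemma sumL_incl {T} (h : T -> R) (l1 l2 : list T) :
  (forall t, 0 <= h t) -> NoDup l1 -> incl l1 l2 -> sumL h l1 <= sumL h l2.
Proof.
  intros H; revert l2; induction l1 as [|a l1 IH]; intros l2 ND Inc.
  - apply sumL_nonneg; auto.
  - inversion ND as [|? ? Ha ND1]; subst.
    destruct (in_split a l2 (Inc a (or_introl eq_refl))) as [l2a [l2b ->]].
    assert (Inc' : incl l1 (l2a ++ l2b)).
    { intros t Ht. assert (t <> a) by (intro; subst; contradiction).
      specialize (Inc t (or_intror Ht)).
      rewrite in_app_iff in *; simpl in Inc; intuition congruence. }
    specialize (IH _ ND1 Inc'). rewrite !sumL_app in *. simpl. lra.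
Qed.

Lemma sumL_list_prod {T U} (h : T * U -> R) l1 l2 :
  sumL h (list_prod l1 l2) = sumL (fun a => sumL (fun b => h (a, b)) l2) l1.
Proof. induction l1; simpl; [lra|]. rewrite sumL_app, sumL_map, IHl1. lra. Qed.

Lemma sum_f_R0_sumL h n : sum_f_R0 h n = sumL h (seq 0 (S n)).
Proof.
  induction n; [simpl; lra|].
  rewrite seq_S, sumL_app, tech5, IHn. simpl. lra.
Qed.

Lemma sum_f_R0_mono h n m :
  (forall k, 0 <= h k) -> (n <= m)%nat -> sum_f_R0 h n <= sum_f_R0 h m.
Proof. intros H Hnm; induction Hnm; [lra|]. simpl. specialize (H (S m)); lra. Qed.

Lemma sum_geometric_half n : sum_f_R0 (fun k => / 2 ^ S k) n = 1 - / 2 ^ S n.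
Proof.
  induction n; [simpl; lra|].
  rewrite tech5, IHn. simpl. field. apply pow_nonzero; lra.
Qed.

Lemma le_epsilon_le a b : (forall eps, 0 < eps -> a <= b + eps) -> a <= b.
Proof.
  intros H. destruct (Rle_dec a b); auto.
  specialize (H ((a - b) / 2)). lra.
Qed.

Definition weight (s : list bool) : R := / 2 ^ length s.

Lemma weight_pos s : 0 < weight s.
Proof. unfold weight. apply Rinv_0_lt_compat, pow_lt; lra. Qed.

Lemma weight_nil : weight [] = 1.
Proof. unfold weight; simpl; apply Rinv_1. Qed.

Lemma weight_cons b s : weight (b :: s) = weight s / 2.
Proof. unfold weight; simpl. rewrite Rinv_mult. unfold Rdiv. lra. Qed.

Lemma weight_snoc s b : weight (s ++ [b]) = weight s / 2.
Proof.
  unfold weight. rewrite length_app, pow_add. simpl.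
  rewrite Rinv_mult. unfold Rdiv. lra.
Qed.

Lemma weight_le_1 s : weight s <= 1.
Proof.
  induction s as [|b s IH]; [rewrite weight_nil; lra|].
  rewrite weight_cons. pose proof (weight_pos s). lra.
Qed.

Lemma wt_nonneg o : 0 <= wt o.
Proof. destruct o; simpl; [left; apply (weight_pos l)|lra]. Qed.

Definition covers (A : cset) (f : nat -> option (list bool)) : Prop :=
  forall x, A x -> exists n s, f n = Some s /\ N s x.

Definition weight_bounded (f : nat -> option (list bool)) (r : R) : Prop :=
  forall n, sum_f_R0 (fun i => wt (f i)) n <= r.

Lemma admissible_nonneg A r : admissible A r -> 0 <= r.
Proof.
  intros [f [_ H]]. specialize (H 0%nat). simpl in H.
  pose proof (wt_nonneg (f 0%nat)). lra.
Qed.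

Lemma N_nil x : N [] x.
Proof. intros i Hi; simpl in Hi; lia. Qed.

Definition single_cover (s : list bool) (n : nat) : option (list bool) :=
  match n with 0%nat => Some s | _ => None end.

Lemma admissible_single_cover (A : cset) s :
  (forall x, A x -> N s x) -> admissible A (weight s).
Proof.
  intro H. exists (single_cover s). split.
  - intros x Hx. exists 0%nat, s; auto.
  - intro n; induction n; simpl in *; [unfold weight; lra|lra].
Qed.

Lemma outer_is_lub A : is_lub (fun y => admissible A (- y)) (- outer A).
Proof.
  unfold outer. rewrite Ropp_involutive.
  match goal with |- is_lub ?P (epsilon ?i ?Q) => apply (epsilon_spec i Q) end.
  assert (Hb : bound (fun y => admissible A (- y))).
  { exists 0. intros y Hy. apply admissible_nonneg in Hy. lra. }
  assert (Hne : exists y, admissible A (- y)).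
  { exists (-1). replace (- -1) with (weight []) by (rewrite weight_nil; ring).
    apply admissible_single_cover. intros; apply N_nil. }
  destruct (completeness _ Hb Hne) as [m Hm]. exists m; exact Hm.
Qed.

Lemma outer_le A r : admissible A r -> outer A <= r.
Proof.
  intro H. destruct (outer_is_lub A) as [Hu _].
  assert (Hr : admissible A (- - r)) by (rewrite Ropp_involutive; auto).
  specialize (Hu _ Hr). lra.
Qed.

Lemma outer_ge A X : (forall r, admissible A r -> X <= r) -> X <= outer A.
Proof.
  intro H. destruct (outer_is_lub A) as [_ Hl].
  assert (Hub : is_upper_bound (fun y => admissible A (- y)) (- X)).
  { intros y Hy. specialize (H _ Hy). lra. }
  specialize (Hl _ Hub). lra.
Qed.

Lemma outer_nonneg A : 0 <= outer A.
Proof. apply outer_ge, admissible_nonneg. Qed.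

Lemma outer_le_weight (A : cset) s : (forall x, A x -> N s x) -> outer A <= weight s.
Proof. intro H. apply outer_le, admissible_single_cover, H. Qed.

Lemma outer_approx A eps :
  0 < eps -> exists f, covers A f /\ weight_bounded f (outer A + eps).
Proof.
  intro He. apply NNPP; intro C.
  assert (Hge : outer A + eps <= outer A); [|lra].
  apply outer_ge. intros r [f [Hc Hb]].
  destruct (Rle_dec (outer A + eps) r) as [|Hn]; auto.
  exfalso; apply C. exists f; split; auto. intro m. specialize (Hb m). lra.
Qed.

Lemma outer_mono (A B : cset) : (forall x, A x -> B x) -> outer A <= outer B.
Proof.
  intro H. apply outer_ge. intros r [f [Hc Hb]]. apply outer_le.
  exists f; split; [intros x Hx; apply Hc, H, Hx|exact Hb].
Qed.

Lemma outer_ext A B : set_eq A B -> outer A = outer B.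
Proof. intro H; apply Rle_antisym; apply outer_mono; intro x; apply H. Qed.

Lemma outer_empty (A : cset) : (forall x, ~ A x) -> outer A = 0.
Proof.
  intro H. apply Rle_antisym; [|apply outer_nonneg]. apply outer_le.
  exists (fun _ => None). split; [intros x Hx; destruct (H x Hx)|].
  intro n; induction n; simpl in *; lra.
Qed.

Lemma sum_pairing_le_grid (h : nat * nat -> R) n :
  (forall p, 0 <= h p) ->
  sum_f_R0 (fun m => h (Cantor.of_nat m)) n <= sumL h (list_prod (seq 0 (S n)) (seq 0 (S n))).
Proof.
  intro Hh. rewrite sum_f_R0_sumL, <- sumL_map. apply sumL_incl; auto.
  - apply NoDup_map_NoDup_ForallPairs; [|apply seq_NoDup].
    intros a b _ _ E. rewrite <- (Cantor.cancel_to_of a), E. apply Cantor.cancel_to_of.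
  - intros p Hp. apply in_map_iff in Hp. destruct Hp as [m [<- Hm]].
    apply in_seq in Hm. destruct (Cantor.of_nat m) as [a b] eqn:E.
    pose proof (Cantor.to_nat_non_decreasing a b) as Hab.
    rewrite <- E, Cantor.cancel_to_of in Hab.
    apply in_prod_iff; split; apply in_seq; lia.
Qed.

(* The covers of the [A k] are merged along Cantor's pairing [nat -> nat * nat];
   the [k]-th one is chosen with slack [eps / 2 ^ (k + 1)]. *)
Lemma outer_countable_subadditive (A : nat -> cset) (B : cset) (M : R) :
  (forall x, B x -> exists k, A k x) ->
  (forall n, sum_f_R0 (fun k => outer (A k)) n <= M) -> outer B <= M.
Proof.
  intros Hcov HM. apply le_epsilon_le. intros eps He.
  assert (Hf : forall k, exists f,
             covers (A k) f /\ weight_bounded f (outer (A k) + eps * / 2 ^ S k)).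
  { intro k. apply outer_approx, Rmult_lt_0_compat; auto.
    apply Rinv_0_lt_compat, pow_lt; lra. }
  destruct (choice _ Hf) as [F HF].
  set (h := fun p : nat * nat => wt (F (fst p) (snd p))).
  apply outer_le. exists (fun m => F (fst (Cantor.of_nat m)) (snd (Cantor.of_nat m))).
  split.
  - intros x Hx. destruct (Hcov x Hx) as [k Hk].
    destruct (proj1 (HF k) x Hk) as [i [s Hs]].
    exists (Cantor.to_nat (k, i)), s. rewrite Cantor.cancel_of_to. exact Hs.
  - intro n.
    assert (Hgrid := sum_pairing_le_grid h n (fun p => wt_nonneg _)).
    assert (Hrows : forall a, sumL (fun b => h (a, b)) (seq 0 (S n))
                              <= outer (A a) + eps * / 2 ^ S a).
    { intro a. rewrite <- sum_f_R0_sumL. apply (proj2 (HF a)). }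
    eapply Rle_trans; [exact Hgrid|].
    rewrite sumL_list_prod. eapply Rle_trans; [apply sumL_le, Hrows|].
    assert (Hgeo : sum_f_R0 (fun k => eps * / 2 ^ S k) n = eps * (1 - / 2 ^ S n)).
    { rewrite <- sum_geometric_half, scal_sum. apply sum_eq; intros; ring. }
    rewrite <- sum_f_R0_sumL, sum_plus, Hgeo.
    specialize (HM n). pose proof (Rinv_0_lt_compat _ (pow_lt 2 (S n) ltac:(lra))).
    nra.
Qed.

Definition pair_family (A B : cset) (k : nat) : cset :=
  match k with 0%nat => A | 1%nat => B | _ => fun _ => False end.

Lemma outer_union_le (A B C : cset) :
  (forall x, C x -> A x \/ B x) -> outer C <= outer A + outer B.
Proof.
  intro H. apply (outer_countable_subadditive (pair_family A B)).
  - intros x Hx. destruct (H x Hx); [exists 0%nat | exists 1%nat]; auto.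
  - assert (Htail : forall n, sum_f_R0 (fun k => outer (pair_family A B k)) (S n)
                              = outer A + outer B).
    { induction n; [reflexivity|]. rewrite tech5, IHn.
      rewrite (outer_empty (pair_family A B (S (S n)))); [lra|auto]. }
    intros [|n]; [simpl; pose proof (outer_nonneg B); lra|]. rewrite Htail; lra.
Qed.

(* Partial sums are monotone, so a common bound on them splits between the two unions. *)
Lemma outer_countable_subadditive2 (A B : nat -> cset) (C D : cset) (r : R) :
  (forall x, C x -> exists k, A k x) -> (forall x, D x -> exists k, B k x) ->
  (forall n, sum_f_R0 (fun k => outer (A k) + outer (B k)) n <= r) ->
  outer C + outer D <= r.
Proof.
  intros HC HD Hr.
  set (a := sum_f_R0 (fun k => outer (A k))). set (b := sum_f_R0 (fun k => outer (B k))).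
  assert (Hab : forall n m, a n + b m <= r).
  { intros n m. pose proof (Hr (Nat.max n m)) as Hmax. rewrite sum_plus in Hmax.
    pose proof (sum_f_R0_mono (fun k => outer (A k)) n (Nat.max n m)
                  (fun k => outer_nonneg _) (Nat.le_max_l n m)).
    pose proof (sum_f_R0_mono (fun k => outer (B k)) m (Nat.max n m)
                  (fun k => outer_nonneg _) (Nat.le_max_r n m)).
    unfold a, b. lra. }
  assert (HbC : forall m, b m <= r - outer C).
  { intro m. enough (outer C <= r - b m) by lra.
    apply (outer_countable_subadditive A); auto.
    intro n. specialize (Hab n m). unfold a in Hab. lra. }
  enough (outer D <= r - outer C) by lra.
  apply (outer_countable_subadditive B); auto.
Qed.

Definition consb (b : bool) (x : Cantor) : Cantor :=
  fun i => match i with 0%nat => b | S j => x j end.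

Definition extend (s : list bool) : Cantor := fun i => nth i s false.

Definition prefix (u t : list bool) : Prop := exists r, t = u ++ r.

Lemma N_extend s : N s (extend s).
Proof. intros i Hi. reflexivity. Qed.

Lemma N_cons b u x : N (b :: u) x <-> x 0%nat = b /\ N u (fun i => x (S i)).
Proof.
  split.
  - intro H. split; [symmetry; apply (H 0%nat); simpl; lia|].
    intros i Hi. apply (H (S i)); simpl; lia.
  - intros [H1 H2] [|i] Hi; simpl; auto. apply H2. simpl in Hi; lia.
Qed.

Lemma N_consb b u y : N (b :: u) (consb b y) <-> N u y.
Proof. rewrite N_cons. simpl. tauto. Qed.

Lemma length_restr x n : length (restr x n) = n.
Proof. unfold restr. rewrite length_map, length_seq; auto. Qed.

Lemma nth_restr x n i d : (i < n)%nat -> nth i (restr x n) d = x i.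
Proof.
  intro H. unfold restr. rewrite nth_indep with (d' := x 0%nat).
  - rewrite map_nth, seq_nth; auto.
  - rewrite length_map, length_seq; auto.
Qed.

Lemma N_restr_iff x y n : N (restr x n) y <-> forall i, (i < n)%nat -> y i = x i.
Proof.
  unfold N. rewrite length_restr. split; intros H i Hi; specialize (H i Hi);
    rewrite nth_restr in *; auto.
Qed.

Lemma N_restr x n : N (restr x n) x.
Proof. apply N_restr_iff; auto. Qed.

Lemma N_iff_restr s x : N s x <-> restr x (length s) = s.
Proof.
  split.
  - intro H. apply nth_ext with (d := false) (d' := false); rewrite length_restr; auto.
    intros i Hi. rewrite nth_restr; auto. symmetry; apply H; auto.
  - intros H i Hi. rewrite <- H, nth_restr; auto.
Qed.

Lemma N_same_length a b y : N a y -> N b y -> length a = length b -> a = b.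
Proof. intros Ha Hb E. apply N_iff_restr in Ha, Hb. congruence. Qed.

Lemma N_snoc t x : N t x -> N (t ++ [x (length t)]) x.
Proof.
  intros H i Hi. rewrite length_app in Hi; simpl in Hi.
  destruct (Nat.lt_ge_cases i (length t)).
  - rewrite app_nth1; auto.
  - replace i with (length t) by lia. rewrite app_nth2, Nat.sub_diag; auto.
Qed.

Lemma N_app_l u r x : N (u ++ r) x -> N u x.
Proof.
  intros H i Hi. rewrite <- H by (rewrite length_app; lia). rewrite app_nth1; auto.
Qed.

Lemma N_prefix_restr s x n : N s x -> (length s <= n)%nat -> prefix s (restr x n).
Proof.
  intros Hs Hn. exists (map x (seq (length s) (n - length s))).
  apply N_iff_restr in Hs. rewrite <- Hs at 1. unfold restr.
  rewrite <- map_app, <- seq_app. f_equal. f_equal. lia.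
Qed.

Lemma N_restr_sub s x y n :
  N s x -> (length s <= n)%nat -> N (restr x n) y -> N s y.
Proof.
  intros Hs Hn Hy. destruct (N_prefix_restr s x n Hs Hn) as [r Hr].
  rewrite Hr in Hy. eapply N_app_l; eauto.
Qed.

Definition tails (b : bool) (L : list (list bool)) : list (list bool) :=
  flat_map (fun u => match u with
                     | c :: u' => if Bool.eqb b c then [u'] else []
                     | [] => []
                     end) L.

Lemma in_tails b L u : In u (tails b L) <-> In (b :: u) L.
Proof.
  unfold tails. rewrite in_flat_map. split.
  - intros [[|c v] [Hv Hu]]; [contradiction|].
    destruct (Bool.eqb b c) eqn:E; [|contradiction].
    apply Bool.eqb_prop in E; subst. destruct Hu as [<-|[]]; auto.
  - intro H. exists (b :: u). rewrite Bool.eqb_reflx. simpl; auto.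
Qed.

Lemma sumL_weight_tails L :
  ~ In [] L -> sumL weight L = (sumL weight (tails false L) + sumL weight (tails true L)) / 2.
Proof.
  induction L as [|[|c u] L IH]; intro H; [simpl; lra|destruct H; left; auto|].
  specialize (IH (fun Hin => H (or_intror Hin))).
  change (tails ?b ((c :: u) :: L)) with ((if Bool.eqb b c then [u] else []) ++ tails b L).
  change (sumL weight ((c :: u) :: L)) with (weight (c :: u) + sumL weight L).
  rewrite !sumL_app, IH, weight_cons. destruct c; simpl; lra.
Qed.

Lemma tails_cover L b t :
  ~ In [] L -> (forall x, N (b :: t) x -> exists u, In u L /\ N u x) ->
  forall y, N t y -> exists u, In u (tails b L) /\ N u y.
Proof.
  intros Hnil Hcov y Hy.
  destruct (Hcov (consb b y)) as [[|c u] [Hu Hux]]; [apply N_consb; auto|contradiction|].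
  apply N_cons in Hux. destruct Hux as [E Hux]. simpl in E; subst.
  exists u. rewrite in_tails. auto.
Qed.

Lemma weight_le_cover_sum k : forall L s,
  (forall u, In u L -> (length u <= k)%nat) ->
  (forall x, N s x -> exists u, In u L /\ N u x) -> weight s <= sumL weight L.
Proof.
  assert (Hw : forall u, 0 <= weight u) by (intro; left; apply weight_pos).
  induction k as [|k IH]; intros L s Hlen Hcov;
    (destruct (classic (In [] L)) as [Hnil|Hnil];
     [eapply Rle_trans; [apply weight_le_1|rewrite <- weight_nil; apply sumL_In_le; auto]|]).
  - destruct (Hcov _ (N_extend s)) as [[|b u] [Hu _]]; [contradiction|].
    specialize (Hlen _ Hu). simpl in Hlen; lia.
  - assert (Htlen : forall b u, In u (tails b L) -> (length u <= k)%nat).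
    { intros b u Hu. apply in_tails, Hlen in Hu. simpl in Hu; lia. }
    rewrite sumL_weight_tails by auto.
    pose proof (sumL_nonneg weight (tails false L) Hw).
    pose proof (sumL_nonneg weight (tails true L) Hw).
    destruct s as [|b s].
    + assert (Hhalf : forall b, 1 <= sumL weight (tails b L)).
      { intro b. rewrite <- weight_nil. apply IH; [apply Htlen|].
        apply (tails_cover L b []); auto. intros x _. apply Hcov, N_nil. }
      pose proof (Hhalf false). pose proof (Hhalf true). rewrite weight_nil. lra.
    + assert (weight s <= sumL weight (tails b L))
        by (apply IH; [apply Htlen|apply tails_cover; auto]).
      rewrite weight_cons. destruct b; lra.
Qed.

Definition covered_upto (f : nat -> option (list bool)) (n : nat) (x : Cantor) : Prop :=
  exists i u, (i <= n)%nat /\ f i = Some u /\ N u x.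

Definition uncovered (f : nat -> option (list bool)) (s t : list bool) : Prop :=
  forall n, exists x, N t x /\ N s x /\ ~ covered_upto f n x.

Lemma uncovered_child f s t :
  uncovered f s t -> uncovered f s (t ++ [false]) \/ uncovered f s (t ++ [true]).
Proof.
  intro H. apply NNPP; intro C. apply not_or_and in C. destruct C as [C0 C1].
  apply not_all_ex_not in C0, C1. destruct C0 as [n0 C0], C1 as [n1 C1].
  destruct (H (Nat.max n0 n1)) as [x [Hx [Hs Hc]]].
  assert (Hmono : forall n, (n <= Nat.max n0 n1)%nat -> ~ covered_upto f n x).
  { intros n Hn [i [u [Hi Hu]]]. apply Hc. exists i, u. split; [lia|auto]. }
  pose proof (N_snoc t x Hx) as Hchild.
  destruct (x (length t)); [apply C1 | apply C0]; exists x; repeat split; auto;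
    apply Hmono; lia.
Qed.

Fixpoint uncovered_path f s (k : nat) : list bool :=
  match k with
  | 0%nat => []
  | S k => let t := uncovered_path f s k in
           if excluded_middle_informative (uncovered f s (t ++ [false]))
           then t ++ [false] else t ++ [true]
  end.

Lemma uncovered_path_uncovered f s :
  uncovered f s [] -> forall k, uncovered f s (uncovered_path f s k).
Proof.
  intros H0 k. induction k; auto. simpl.
  destruct (excluded_middle_informative _) as [G|G]; auto.
  destruct (uncovered_child _ _ _ IHk); [contradiction|auto].
Qed.

Lemma length_uncovered_path f s k : length (uncovered_path f s k) = k.
Proof.
  induction k; simpl; auto.
  destruct (excluded_middle_informative _); rewrite length_app, IHk; simpl; lia.
Qed.

Lemma nth_uncovered_path f s k i :
  (i < k)%nat -> nth i (uncovered_path f s k) false = nth i (uncovered_path f s (S i)) false.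
Proof.
  induction k; intro H; [lia|].
  destruct (Nat.eq_dec i k); [subst; auto|].
  rewrite <- IHk by lia. simpl.
  destruct (excluded_middle_informative _); rewrite app_nth1; auto;
    rewrite length_uncovered_path; lia.
Qed.

(* König's lemma: the limit of the path of uncovered nodes would be an uncovered point. *)
Lemma cylinder_compact (s : list bool) (f : nat -> option (list bool)) :
  covers (N s) f -> exists n, forall x, N s x -> covered_upto f n x.
Proof.
  intro Hcov. apply NNPP; intro C.
  assert (G0 : uncovered f s []).
  { intro n. apply NNPP; intro C'. apply C. exists n. intros x Hx. apply NNPP; intro C''.
    apply C'. exists x. split; [apply N_nil|auto]. }
  set (p := uncovered_path f s).
  pose proof (uncovered_path_uncovered f s G0) as Hp.
  set (x := fun i => nth i (p (S i)) false).
  assert (Hx : forall k, N (p k) x).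
  { intros k i Hi. unfold p in Hi. rewrite length_uncovered_path in Hi.
    apply nth_uncovered_path; auto. }
  assert (Hpath : forall t, N t x -> p (length t) = t).
  { intros t Ht. destruct (Hp (length t) 0%nat) as [y [Hy1 _]].
    apply (N_same_length _ _ x); auto. apply length_uncovered_path. }
  assert (Hs : N s x).
  { destruct (Hp (length s) 0%nat) as [y [Hy1 [Hy2 _]]].
    rewrite <- (N_same_length _ _ y Hy1 Hy2 (length_uncovered_path f s _)); auto. }
  destruct (Hcov x Hs) as [n [u [Hf Hu]]].
  destruct (Hp (length u) n) as [y [Hy1 [_ Hy3]]].
  apply Hy3. exists n, u. repeat split; auto. rewrite <- (Hpath u Hu); auto.
Qed.

Definition somes (f : nat -> option (list bool)) (l : list nat) : list (list bool) :=
  flat_map (fun i => match f i with Some u => [u] | None => [] end) l.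

Lemma sumL_weight_somes f l : sumL weight (somes f l) = sumL (fun i => wt (f i)) l.
Proof.
  unfold somes. induction l; simpl; auto. rewrite sumL_app, IHl.
  destruct (f a); simpl; unfold weight; lra.
Qed.

Lemma length_bound (L : list (list bool)) :
  exists k, forall u, In u L -> (length u <= k)%nat.
Proof.
  induction L as [|a L [k Hk]]; [exists 0%nat; intros u []|].
  exists (Nat.max k (length a)). intros u [<-|Hu]; [lia|]. specialize (Hk u Hu); lia.
Qed.

Lemma outer_N s : outer (N s) = weight s.
Proof.
  apply Rle_antisym; [apply outer_le_weight; auto|].
  apply outer_ge. intros r [f [Hc Hb]].
  destruct (cylinder_compact s f Hc) as [n Hn].
  specialize (Hb n). rewrite sum_f_R0_sumL, <- sumL_weight_somes in Hb.
  eapply Rle_trans; [|exact Hb].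
  destruct (length_bound (somes f (seq 0 (S n)))) as [k Hk].
  apply (weight_le_cover_sum k); auto.
  intros x Hx. destruct (Hn x Hx) as [i [u [Hi [Hf Hu]]]]. exists u. split; auto.
  apply in_flat_map. exists i. rewrite Hf. split; [apply in_seq; lia|left; auto].
Qed.

Lemma N_snoc_cases s y : N s y -> N (s ++ [false]) y \/ N (s ++ [true]) y.
Proof. intro H. pose proof (N_snoc s y H). destruct (y (length s)); auto. Qed.

Lemma measurable_of_le A :
  (forall E, outer (inter E A) + outer (diff E A) <= outer E) -> measurable A.
Proof.
  intros H E. apply Rle_antisym; auto. apply outer_union_le.
  intros x Hx. destruct (classic (A x)); [left|right]; split; auto.
Qed.

Definition cyl (o : option (list bool)) : cset :=
  match o with Some s => N s | None => fun _ => False end.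

Definition split_outer (P : cset) (s : list bool) : R :=
  outer (inter (N s) P) + outer (diff (N s) P).

Lemma split_outer_children P t :
  split_outer P t <= split_outer P (t ++ [false]) + split_outer P (t ++ [true]).
Proof.
  unfold split_outer.
  assert (outer (inter (N t) P) <=
          outer (inter (N (t ++ [false])) P) + outer (inter (N (t ++ [true])) P)).
  { apply outer_union_le. intros y [Hy Hc].
    destruct (N_snoc_cases t y Hy); [left|right]; split; auto. }
  assert (outer (diff (N t) P) <=
          outer (diff (N (t ++ [false])) P) + outer (diff (N (t ++ [true])) P)).
  { apply outer_union_le. intros y [Hy Hc].
    destruct (N_snoc_cases t y Hy); [left|right]; split; auto. }
  lra.
Qed.

Lemma measurable_of_cylinders P :
  (forall s, split_outer P s <= weight s) -> measurable P.
Proof.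
  intro HP. apply measurable_of_le. intro E. apply le_epsilon_le. intros eps He.
  destruct (outer_approx E eps He) as [f [Hc Hb]].
  apply (outer_countable_subadditive2 (fun k => inter (cyl (f k)) P)
                                      (fun k => diff (cyl (f k)) P)).
  - intros x [Hx Px]. destruct (Hc x Hx) as [n [s [Hf Hs]]].
    exists n. rewrite Hf. split; auto.
  - intros x [Hx Px]. destruct (Hc x Hx) as [n [s [Hf Hs]]].
    exists n. rewrite Hf. split; auto.
  - intro n. eapply Rle_trans; [|apply Hb]. apply sum_Rle. intros k _.
    destruct (f k) as [s|]; [apply (HP s)|].
    rewrite !outer_empty; simpl; [lra| |]; intros x []; auto.
Qed.

Definition coord (i : nat) (b : bool) : cset := fun x => x i = b.

(* Split [N s] into its children until coordinate [i] is fixed on each piece. *)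
Lemma split_outer_coord i b s : split_outer (coord i b) s <= weight s.
Proof.
  assert (Hlong : forall t, (i < length t)%nat -> split_outer (coord i b) t <= weight t).
  { intros t Ht. unfold split_outer, coord.
    destruct (Bool.bool_dec (nth i t false) b) as [E|E].
    - rewrite (outer_empty (diff _ _))
        by (intros y [Hy Hc]; apply Hc; rewrite <- (Hy i Ht); auto).
      pose proof (outer_le_weight (inter (N t) (fun x => x i = b)) t (fun y H => proj1 H)).
      lra.
    - rewrite (outer_empty (inter _ _))
        by (intros y [Hy Hc]; apply E; rewrite (Hy i Ht); auto).
      pose proof (outer_le_weight (diff (N t) (fun x => x i = b)) t (fun y H => proj1 H)).
      lra. }
  assert (Hk : forall k t, (i < length t + k)%nat -> split_outer (coord i b) t <= weight t).
  { induction k as [|k IH]; intros t Ht; [apply Hlong; lia|].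
    destruct (Nat.lt_ge_cases i (length t)) as [Hlt|Hge]; [apply Hlong; auto|].
    pose proof (split_outer_children (coord i b) t) as Hsplit.
    pose proof (IH (t ++ [false])) as H0. pose proof (IH (t ++ [true])) as H1.
    rewrite length_app, weight_snoc in H0, H1. simpl in H0, H1.
    specialize (H0 ltac:(lia)). specialize (H1 ltac:(lia)). lra. }
  apply (Hk (S i)). lia.
Qed.

Lemma measurable_coord i b : measurable (coord i b).
Proof. apply measurable_of_cylinders, split_outer_coord. Qed.

Lemma measurable_ext A B : set_eq A B -> measurable A -> measurable B.
Proof.
  intros H HA E. rewrite (HA E).
  f_equal; apply outer_ext; intro x; unfold inter, diff; rewrite (H x); tauto.
Qed.

Lemma measurable_compl A : measurable A -> measurable (compl A).
Proof.
  intros HA E. rewrite (HA E), Rplus_comm.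
  f_equal; apply outer_ext; intro x; unfold inter, diff, compl; split;
    intros [H1 H2]; split; auto; apply NNPP; exact H2.
Qed.

Lemma measurable_union A B :
  measurable A -> measurable B -> measurable (fun x => A x \/ B x).
Proof.
  intros HA HB. apply measurable_of_le. intro E.
  rewrite (HA E), (HB (diff E A)).
  assert (outer (inter E (fun x => A x \/ B x))
          <= outer (inter E A) + outer (inter (diff E A) B)).
  { apply outer_union_le. intros x [Hx [Ha|Hb]]; [left; split; auto|].
    destruct (classic (A x)); [left|right]; repeat split; auto. }
  assert (outer (diff E (fun x => A x \/ B x)) = outer (diff (diff E A) B))
    by (apply outer_ext; intro x; unfold diff; tauto).
  lra.
Qed.

Lemma measurable_inter A B : measurable A -> measurable B -> measurable (inter A B).
Proof.
  intros HA HB. apply measurable_ext with (compl (fun x => compl A x \/ compl B x)).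
  - intro x. unfold compl, inter. split; [intro H; split; apply NNPP; tauto|tauto].
  - apply measurable_compl, measurable_union; apply measurable_compl; auto.
Qed.

Lemma measurable_empty : measurable (fun _ => False).
Proof.
  intro E. rewrite (outer_empty (inter E _)) by (intros x [_ []]).
  rewrite Rplus_0_l. apply outer_ext. intro x; unfold diff; tauto.
Qed.

Lemma measurable_N s : measurable (N s).
Proof.
  induction s as [|b s IH] using rev_ind.
  - apply measurable_ext with (compl (fun _ => False)); [|apply measurable_compl, measurable_empty].
    intro x. unfold compl. split; [intros; apply N_nil|tauto].
  - apply measurable_ext with (inter (N s) (coord (length s) b));
      [|apply measurable_inter, measurable_coord; auto].
    intro x. unfold inter, coord. split.
    + intros [Hs <-]. apply N_snoc; auto.
    + intro H. split; [eapply N_app_l; eauto|].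
      rewrite <- (H (length s)) by (rewrite length_app; simpl; lia).
      rewrite app_nth2, Nat.sub_diag; auto.
Qed.

Section DisjointUnion.

Variable A : nat -> cset.
Hypothesis A_measurable : forall k, measurable (A k).
Hypothesis A_disjoint : forall j k x, A j x -> A k x -> j = k.

Let first (n : nat) : cset := fun x => exists k, (k < n)%nat /\ A k x.

Lemma measurable_first n : measurable (first n).
Proof.
  induction n as [|n IHn].
  - apply measurable_ext with (fun _ => False); [|apply measurable_empty].
    intro x; unfold first; split; [tauto|]. intros [k [Hk _]]; lia.
  - apply measurable_ext with (fun x => first n x \/ A n x); [|apply measurable_union; auto].
    intro x; unfold first; split.
    + intros [[k [Hk Ha]]|Ha]; [exists k|exists n]; split; auto.
    + intros [k [Hk Ha]]. destruct (Nat.eq_dec k n); [subst; right; auto|].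
      left; exists k; split; auto; lia.
Qed.

Lemma outer_inter_first E n :
  outer (inter E (first n)) = sumL (fun k => outer (inter E (A k))) (seq 0 n).
Proof.
  induction n as [|n IHn].
  - apply outer_empty. intros x [_ [k [Hk _]]]; lia.
  - rewrite seq_S, sumL_app, <- IHn, (A_measurable n (inter E (first (S n)))). simpl.
    assert (outer (inter (inter E (first (S n))) (A n)) = outer (inter E (A n))).
    { apply outer_ext. intro x; unfold inter, first; split; [tauto|].
      intros [H1 H2]; repeat split; auto. exists n; split; auto. }
    assert (outer (diff (inter E (first (S n))) (A n)) = outer (inter E (first n))).
    { apply outer_ext. intro x; unfold inter, diff, first; split.
      - intros [[H1 [k [Hk Ha]]] H2]. split; auto. exists k. split; auto.
        destruct (Nat.eq_dec k n); [subst; contradiction|lia].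
      - intros [H1 [k [Hk Ha]]]. split; [split; auto; exists k; split; auto|].
        intro Hn. specialize (A_disjoint _ _ _ Ha Hn). lia. }
    lra.
Qed.

Lemma sum_outer_disjoint_le E n :
  (forall k x, A k x -> E x) -> sum_f_R0 (fun k => outer (A k)) n <= outer E.
Proof.
  intro HE. eapply Rle_trans; [|apply (outer_mono (inter E (first (S n))))];
    [|intros x []; auto].
  rewrite outer_inter_first, sum_f_R0_sumL. apply sumL_le. intro k.
  right. apply outer_ext. intro x; unfold inter; split; [intro; split; eauto|tauto].
Qed.

Lemma measurable_disjoint_union : measurable (fun x => exists k, A k x).
Proof.
  set (U := fun x => exists k, A k x).
  apply measurable_of_le. intro E.
  assert (Hfirst : forall n, sumL (fun k => outer (inter E (A k))) (seq 0 n)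
                             + outer (diff E U) <= outer E).
  { intro n. rewrite (measurable_first n E), <- outer_inter_first.
    enough (outer (diff E U) <= outer (diff E (first n))) by lra.
    apply outer_mono. intros x [H1 H2]. split; auto. intros [k [_ Hk]]. apply H2; exists k; auto. }
  enough (outer (inter E U) <= outer E - outer (diff E U)) by lra.
  apply (outer_countable_subadditive (fun k => inter E (A k))).
  - intros x [Hx [k Hk]]. exists k; split; auto.
  - intro n. rewrite sum_f_R0_sumL. specialize (Hfirst (S n)). lra.
Qed.

End DisjointUnion.

Lemma prefix_length u t : prefix u t -> (length u <= length t)%nat.
Proof. intros [r ->]. rewrite length_app; lia. Qed.

Lemma prefix_N u t x : prefix u t -> N t x -> N u x.
Proof. intros [r ->]. apply N_app_l. Qed.

Lemma prefix_restr x m n : (m <= n)%nat -> prefix (restr x m) (restr x n).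
Proof. intro H. apply N_prefix_restr; [apply N_restr|rewrite length_restr; auto]. Qed.

Lemma N_eq_restr t x : N t x -> t = restr x (length t).
Proof. intro H. symmetry. apply N_iff_restr, H. Qed.

Fixpoint bits_of_pos (p : positive) : list bool :=
  match p with xH => [] | xO p => false :: bits_of_pos p | xI p => true :: bits_of_pos p end.

Fixpoint pos_of_bits (l : list bool) : positive :=
  match l with [] => xH | false :: l => xO (pos_of_bits l) | true :: l => xI (pos_of_bits l) end.

Definition bits_of_nat (n : nat) : list bool := bits_of_pos (Pos.of_succ_nat n).

Lemma bits_of_nat_inj a b : bits_of_nat a = bits_of_nat b -> a = b.
Proof.
  assert (Hp : forall p, pos_of_bits (bits_of_pos p) = p) by (induction p; simpl; congruence).
  unfold bits_of_nat. intro H. apply (f_equal pos_of_bits) in H. rewrite !Hp in H.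
  apply SuccNat2Pos.inj; auto.
Qed.

Lemma bits_of_nat_surj t : exists k, bits_of_nat k = t.
Proof.
  assert (Hl : forall l, bits_of_pos (pos_of_bits l) = l)
    by (induction l as [|[|] l IH]; simpl; congruence).
  exists (Nat.pred (Pos.to_nat (pos_of_bits t))). unfold bits_of_nat.
  rewrite SuccNat2Pos.inv with (p := pos_of_bits t); [apply Hl|].
  pose proof (Pos2Nat.is_pos (pos_of_bits t)). lia.
Qed.

Lemma least_witness (P : nat -> Prop) :
  (exists n, P n) -> exists n, P n /\ forall m, (m < n)%nat -> ~ P m.
Proof.
  intros [n Hn]. induction n as [n IH] using lt_wf_ind.
  destruct (classic (exists m, (m < n)%nat /\ P m)) as [[m [Hm Pm]]|No].
  - apply (IH m); auto.
  - exists n. split; auto. intros m Hm Pm. apply No. exists m; auto.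
Qed.

Definition ratio (A : cset) (s : list bool) : R := outer (inter A (N s)) / outer (N s).

Lemma ratio_le_1 A s : ratio A s <= 1.
Proof.
  unfold ratio. rewrite outer_N. pose proof (weight_pos s).
  assert (outer (inter A (N s)) <= weight s) by (apply outer_le_weight; intros x []; auto).
  apply Rmult_le_reg_r with (weight s); auto. unfold Rdiv. rewrite Rmult_assoc, Rinv_l; lra.
Qed.

Definition thin (C : cset) (q : R) (t : list bool) : Prop := outer (inter C (N t)) < q * weight t.

Definition thin_often (C : cset) (q : R) : cset :=
  fun x => C x /\ forall m, exists n, (m <= n)%nat /\ thin C q (restr x n).

Definition minimal_thin (C : cset) (q : R) (u t : list bool) : Prop :=
  prefix u t /\ thin C q t /\
  forall t', prefix u t' -> prefix t' t -> t' <> t -> ~ thin C q t'.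

Lemma minimal_thin_exists C q u x :
  thin_often C q x -> N u x -> exists t, minimal_thin C q u t /\ N t x.
Proof.
  intros [_ Hs] Hu.
  destruct (least_witness (fun n => (length u <= n)%nat /\ thin C q (restr x n)))
    as [n0 [[H1 H2] H3]].
  { destruct (Hs (length u)) as [n [Hn Hb]]. exists n; auto. }
  exists (restr x n0). split; [|apply N_restr]. repeat split; auto.
  - apply N_prefix_restr; auto.
  - intros t' Hut' Ht't Hne Hb.
    pose proof (prefix_length _ _ Ht't) as Hlen. rewrite length_restr in Hlen.
    assert (Ht' : t' = restr x (length t')) by (apply N_eq_restr, (prefix_N _ _ _ Ht't), N_restr).
    apply (H3 (length t')).
    + destruct (Nat.eq_dec (length t') n0) as [E|E]; [|lia].
      exfalso. apply Hne. rewrite Ht', E. auto.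
    + split; [apply prefix_length; auto|]. rewrite <- Ht'. auto.
Qed.

Lemma minimal_thin_unique C q u t1 t2 x :
  minimal_thin C q u t1 -> minimal_thin C q u t2 -> N t1 x -> N t2 x -> t1 = t2.
Proof.
  assert (Hcase : forall t1 t2, (length t1 <= length t2)%nat ->
            minimal_thin C q u t1 -> minimal_thin C q u t2 -> N t1 x -> N t2 x -> t1 = t2).
  { intros a b Hab [Hua [Ha _]] [_ [_ Hmin]] Hxa Hxb.
    apply NNPP; intro Hne. apply (Hmin a); auto.
    rewrite (N_eq_restr a x Hxa), (N_eq_restr b x Hxb). apply prefix_restr; auto. }
  intros. destruct (Nat.le_ge_cases (length t1) (length t2)); [|symmetry]; apply Hcase; auto.
Qed.

(* The minimal thin extensions of [u] have disjoint cylinders inside [N u]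
   and each carries at most the fraction [q] of [C]. *)
Lemma outer_thin_often_local C q u : 0 <= q -> outer (inter (thin_often C q) (N u)) <= q * weight u.
Proof.
  intro Hq.
  set (D := fun k x => minimal_thin C q u (bits_of_nat k) /\ N (bits_of_nat k) x).
  assert (HD : forall k, (minimal_thin C q u (bits_of_nat k) /\ set_eq (D k) (N (bits_of_nat k)))
                         \/ set_eq (D k) (fun _ => False)).
  { intro k. destruct (classic (minimal_thin C q u (bits_of_nat k))); [left|right];
      [split; auto|]; intro x; unfold D; tauto. }
  apply (outer_countable_subadditive (fun k => inter C (D k))).
  - intros x [Hx Hu]. destruct (minimal_thin_exists C q u x Hx Hu) as [t [Ht Htx]].
    destruct (bits_of_nat_surj t) as [k <-]. exists k. split; [apply Hx|split; auto].
  - intro n. apply Rle_trans with (q * sum_f_R0 (fun k => outer (D k)) n).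
    + rewrite scal_sum. apply sum_Rle. intros k _.
      destruct (HD k) as [[[_ [Hthin _]] E]|E]; rewrite (outer_ext _ _ E).
      * rewrite outer_N. left. eapply Rle_lt_trans; [|rewrite Rmult_comm; exact Hthin].
        apply outer_mono. intros x [Cx Dx]. split; [exact Cx|exact (proj1 (E x) Dx)].
      * rewrite (outer_empty (fun _ => False)) by auto.
        rewrite outer_empty by (intros x [_ Dx]; exact (proj1 (E x) Dx)). lra.
    + rewrite <- outer_N. apply Rmult_le_compat_l; auto.
      apply sum_outer_disjoint_le.
      * intro k. destruct (HD k) as [[_ E]|E].
        -- apply (measurable_ext (N (bits_of_nat k))); [intro x; symmetry; apply E|apply measurable_N].
        -- apply (measurable_ext (fun _ => False)); [intro x; symmetry; apply E|].
           apply measurable_empty.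
      * intros j k x [Hj Hxj] [Hk Hxk].
        apply bits_of_nat_inj, (minimal_thin_unique C q u _ _ x); auto.
      * intros k x [[Hu _] Hx]. eapply prefix_N; eauto.
Qed.

Lemma outer_thin_often C q : 0 <= q < 1 -> outer (thin_often C q) = 0.
Proof.
  intro Hq. set (S := thin_often C q).
  assert (Hself : forall eps, 0 < eps -> outer S <= q * (outer S + eps)).
  { intros eps He. destruct (outer_approx S eps He) as [f [Hc Hb]].
    apply (outer_countable_subadditive (fun j => inter S (cyl (f j)))).
    - intros x Hx. destruct (Hc x Hx) as [n [s [Hf Hs]]]. exists n. rewrite Hf. split; auto.
    - intro n. apply Rle_trans with (q * sum_f_R0 (fun j => wt (f j)) n);
        [|apply Rmult_le_compat_l; [lra|apply Hb]].
      rewrite scal_sum. apply sum_Rle. intros k _. destruct (f k) as [u|].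
      + rewrite Rmult_comm. apply outer_thin_often_local; lra.
      + rewrite outer_empty by (intros x [_ []]). simpl; lra. }
  pose proof (outer_nonneg S).
  assert ((1 - q) * outer S <= 0).
  { apply le_epsilon_le. intros eps He. specialize (Hself eps He). nra. }
  nra.
Qed.

Lemma not_cv_1_below (u : nat -> R) :
  (forall n, u n <= 1) -> ~ Un_cv u 1 ->
  exists eps, 0 < eps /\ forall M, exists n, (M <= n)%nat /\ u n <= 1 - eps.
Proof.
  intros Hle Hcv. apply NNPP; intro No. apply Hcv. intros eps He.
  apply NNPP; intro No2. apply No. exists eps. split; auto. intro M.
  apply NNPP; intro No3. apply No2. exists M. intros n Hn. unfold R_dist.
  rewrite Rabs_minus_sym, Rabs_pos_eq by (specialize (Hle n); lra).
  destruct (Rlt_le_dec (1 - u n) eps); auto. exfalso; apply No3. exists n; split; [lia|lra].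
Qed.

(* Lebesgue's density theorem, for an arbitrary (not necessarily measurable) [C]. *)
Lemma outer_not_density_point C : outer (fun x => C x /\ ~ density_at C x 1) = 0.
Proof.
  apply Rle_antisym; [|apply outer_nonneg].
  apply (outer_countable_subadditive (fun j => thin_often C (1 - / (INR j + 1)))).
  - intros x [Cx Hd].
    destruct (not_cv_1_below _ (fun n => ratio_le_1 C (restr x n)) Hd) as [eps [He Hn]].
    destruct (archimed_cor1 eps He) as [j [Hj Hj0]].
    exists j. split; auto. intro m. destruct (Hn m) as [n [Hnm Hr]]. exists n. split; auto.
    assert (0 < INR j) by (apply lt_0_INR; auto).
    assert (/ (INR j + 1) < / INR j) by (apply Rinv_lt_contravar; nra).
    unfold thin. unfold ratio in Hr. rewrite outer_N in Hr. pose proof (weight_pos (restr x n)).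
    apply Rmult_le_compat_r with (r := weight (restr x n)) in Hr; [|lra].
    unfold Rdiv in Hr. rewrite Rmult_assoc, Rinv_l in Hr; nra.
  - intro n. rewrite sum_eq_R0; [lra|]. intros k _. apply outer_thin_often.
    pose proof (pos_INR k).
    assert (0 < / (INR k + 1) <= 1); [|lra].
    split; [apply Rinv_0_lt_compat; lra|rewrite <- Rinv_1; apply Rinv_le_contravar; lra].
Qed.

Lemma density_at_ratio A x l : density_at A x l <-> Un_cv (fun n => ratio A (restr x n)) l.
Proof. reflexivity. Qed.

Lemma Un_cv_one_minus (u : nat -> R) l : Un_cv u l -> Un_cv (fun n => 1 - u n) (1 - l).
Proof.
  intros Hu eps He. destruct (Hu eps He) as [M HM]. exists M. intros n Hn.
  specialize (HM n Hn). unfold R_dist in *.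
  replace (1 - u n - (1 - l)) with (- (u n - l)) by ring. rewrite Rabs_Ropp; auto.
Qed.

Lemma ratio_compl B s : measurable B -> ratio (compl B) s = 1 - ratio B s.
Proof.
  intro HB. unfold ratio. rewrite outer_N.
  pose proof (HB (N s)) as E. rewrite outer_N in E.
  rewrite (outer_ext (inter (compl B) (N s)) (diff (N s) B))
    by (intro x; unfold inter, diff, compl; tauto).
  rewrite (outer_ext (inter B (N s)) (inter (N s) B)) by (intro x; unfold inter; tauto).
  pose proof (weight_pos s). rewrite E. field. lra.
Qed.

Lemma density_at_compl B x l :
  measurable B -> density_at (compl B) x (1 - l) <-> density_at B x l.
Proof.
  intro HB. rewrite !density_at_ratio. split; intro H; apply Un_cv_one_minus in H.
  - replace (1 - (1 - l)) with l in H by ring.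
    eapply Un_cv_ext; [|exact H]. intro n. cbv beta. rewrite ratio_compl by auto. ring.
  - eapply Un_cv_ext; [|exact H]. intro n. cbv beta. rewrite ratio_compl by auto. ring.
Qed.

Definition ae_eq (A B : cset) : Prop := outer (diff A B) = 0 /\ outer (diff B A) = 0.

Lemma outer_le_null_diff X Y Z :
  (forall x, X x -> ~ Y x -> Z x) -> outer Z = 0 -> outer X <= outer Y.
Proof.
  intros H HZ. rewrite <- (Rplus_0_r (outer Y)), <- HZ. apply outer_union_le.
  intros x Hx. destruct (classic (Y x)); auto.
Qed.

Lemma ae_eq_sym A B : ae_eq A B -> ae_eq B A.
Proof. intros [? ?]; split; auto. Qed.

Lemma ae_eq_trans A B C : ae_eq A B -> ae_eq B C -> ae_eq A C.
Proof.
  intros [HAB HBA] [HBC HCB]. split; apply Rle_antisym; try apply outer_nonneg.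
  - rewrite <- (Rplus_0_r 0), <- HAB at 1. rewrite <- HBC. apply outer_union_le.
    intros x [Ha Hc]. destruct (classic (B x)); [right|left]; split; auto.
  - rewrite <- (Rplus_0_r 0), <- HCB at 1. rewrite <- HBA. apply outer_union_le.
    intros x [Hc Ha]. destruct (classic (B x)); [right|left]; split; auto.
Qed.

Lemma ae_eq_of_set_eq A B : set_eq A B -> ae_eq A B.
Proof. intro H. split; apply outer_empty; intros x [H1 H2]; apply H2, H; auto. Qed.

Lemma ae_eq_compl A B : ae_eq A B -> ae_eq (compl A) (compl B).
Proof.
  intros [H1 H2]. split; [rewrite <- H2|rewrite <- H1]; apply outer_ext; intro x;
    unfold diff, compl; split; try tauto; intros [Hn Hnn]; split; auto; apply NNPP; auto.
Qed.

Lemma measurable_ae_eq A B : ae_eq A B -> measurable A -> measurable B.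
Proof.
  intros [HAB HBA] HA E. rewrite (HA E).
  assert (Hle : forall X Y Z, outer Z = 0 -> (forall x, X x -> ~ Y x -> Z x) -> outer X <= outer Y)
    by (intros; eapply outer_le_null_diff; eauto).
  assert (outer (inter E A) = outer (inter E B)).
  { apply Rle_antisym; [apply (Hle _ _ _ HAB)|apply (Hle _ _ _ HBA)];
      intros x Hx Hy; unfold inter, diff in *; tauto. }
  assert (outer (diff E A) = outer (diff E B)).
  { apply Rle_antisym; [apply (Hle _ _ _ HBA)|apply (Hle _ _ _ HAB)];
      intros x Hx Hy; unfold diff in *; (split; [apply NNPP|]; tauto). }
  lra.
Qed.

Lemma ratio_ae_eq A B s : ae_eq A B -> ratio A s = ratio B s.
Proof.
  intros [HAB HBA]. unfold ratio. f_equal.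
  apply Rle_antisym;
    [apply (outer_le_null_diff _ _ (diff A B))|apply (outer_le_null_diff _ _ (diff B A))];
    auto; intros x Hx Hy; unfold inter, diff in *; tauto.
Qed.

Lemma density_at_ae_eq A B x l : ae_eq A B -> density_at A x l -> density_at B x l.
Proof. intros H D. eapply Un_cv_ext; [|exact D]. intro n. apply ratio_ae_eq, H. Qed.

Lemma ae_eq_Phi B : measurable B -> ae_eq B (Phi B).
Proof.
  intro HB. split; [apply outer_not_density_point|].
  apply Rle_antisym; [|apply outer_nonneg]. rewrite <- (outer_not_density_point (compl B)).
  apply outer_mono. intros x [Hp Hb]. split; auto. intro Hc.
  replace 1 with (1 - 0) in Hc by ring. apply (density_at_compl B x 0 HB) in Hc.
  pose proof (UL_sequence _ _ _ Hp Hc). lra.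
Qed.

Lemma dualistic_T_clopen A : T_clopen A -> dualistic A.
Proof.
  intros [HA [Hp Hpc]]. split; auto. intro x. destruct (classic (A x)) as [Ax|Ax].
  - exists 1. split; auto. apply Hp; auto.
  - exists 0. split; auto. apply (density_at_compl A x 0 HA).
    replace (1 - 0) with 1 by ring. apply Hpc; auto.
Qed.

Lemma Phi_ae_eq A B : ae_eq A B -> set_eq (Phi A) (Phi B).
Proof. intros H x. split; apply density_at_ae_eq; auto. apply ae_eq_sym; auto. Qed.

Lemma ae_eq_of_Phi B A : measurable B -> set_eq A (Phi B) -> ae_eq B A.
Proof.
  intros HB HA. eapply ae_eq_trans; [apply ae_eq_Phi; auto|].
  apply ae_eq_of_set_eq. intro x; symmetry; apply HA.
Qed.

Lemma Phi_fixed B A : measurable B -> set_eq A (Phi B) -> set_eq (Phi A) A.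
Proof.
  intros HB HA x. rewrite (Phi_ae_eq A B (ae_eq_sym _ _ (ae_eq_of_Phi B A HB HA)) x).
  symmetry. apply HA.
Qed.

Lemma T_clopen_Phi_dualistic A B : dualistic B -> set_eq A (Phi B) -> T_clopen A.
Proof.
  intros [HB Hd] HA. pose proof (ae_eq_of_Phi B A HB HA) as Hae.
  assert (HmA : measurable A) by (eapply measurable_ae_eq; eauto).
  split; [auto|split; [apply (Phi_fixed B); auto|]].
  intro x. unfold Phi, compl. split.
  - intros H Ax. replace 1 with (1 - 0) in H by ring.
    apply (density_at_compl A x 0 HmA) in H.
    pose proof (UL_sequence _ _ _ H (proj2 (Phi_fixed B A HB HA x) Ax)). lra.
  - intro H. apply (density_at_ae_eq (compl B)); [apply ae_eq_compl; auto|].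
    destruct (Hd x) as [l [Hl [->| ->]]]; [|exfalso; apply H, HA; auto].
    replace 1 with (1 - 0) by ring. apply (density_at_compl B x 0 HB); auto.
Qed.

Lemma restr_eq_of_N x y n : N (restr x n) y -> restr y n = restr x n.
Proof. intro H. apply N_iff_restr in H. rewrite length_restr in H. auto. Qed.

Lemma is_open_restr_witness (U : cset) (P : nat -> list bool -> Prop) :
  (forall x, U x -> exists n, P n (restr x n)) -> (forall x n, P n (restr x n) -> U x) ->
  is_open U.
Proof.
  intros Hex Hback x Ux. destruct (Hex x Ux) as [n Hn]. exists n. intros y Hy.
  apply (Hback y n). rewrite (restr_eq_of_N x y n Hy). auto.
Qed.

Lemma Un_cv_near_half (u : nat -> R) l :
  Un_cv u l -> exists M, forall n, (M <= n)%nat -> l - 1/2 < u n < l + 1/2.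
Proof.
  intro H. destruct (H (1/2)) as [M HM]; [lra|]. exists M. intros n Hn.
  specialize (HM n Hn). unfold R_dist in HM. apply Rabs_def2 in HM. lra.
Qed.

(* On a T-clopen set the density ratios eventually stay on one side of 1/2. *)
Lemma Delta02_T_clopen A : T_clopen A -> Delta02 A.
Proof.
  intro HT. pose proof (dualistic_T_clopen A HT) as [_ Hd]. destruct HT as [_ [Hp _]].
  assert (D1 : forall x, A x -> exists M, forall n, (M <= n)%nat -> 1/2 < ratio A (restr x n)).
  { intros x Ax. destruct (Un_cv_near_half (fun n => ratio A (restr x n)) 1 (proj2 (Hp x) Ax))
      as [M HM].
    exists M. intros n Hn. specialize (HM n Hn). cbv beta in HM. lra. }
  assert (D0 : forall x, ~ A x -> exists M, forall n, (M <= n)%nat -> ratio A (restr x n) < 1/2).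
  { intros x Ax. destruct (Hd x) as [l [Hl [->| ->]]]; [|exfalso; apply Ax, Hp; auto].
    destruct (Un_cv_near_half (fun n => ratio A (restr x n)) 0 Hl) as [M HM].
    exists M. intros n Hn. specialize (HM n Hn). cbv beta in HM. lra. }
  split.
  - exists (fun m x => forall n, (m <= n)%nat -> 1/2 <= ratio A (restr x n)). split.
    + intro m. apply (is_open_restr_witness _ (fun n t => (m <= n)%nat /\ ratio A t < 1/2)).
      * intros x Hx. apply not_all_ex_not in Hx. destruct Hx as [n Hn].
        exists n. apply imply_to_and in Hn. destruct Hn. split; [auto|lra].
      * intros x n [Hmn Hr] Hx. specialize (Hx n Hmn). lra.
    + intro x. split.
      * intro Ax. destruct (D1 x Ax) as [M HM]. exists M. intros n Hn. left; auto.
      * intros [m Hm]. apply NNPP; intro Ax. destruct (D0 x Ax) as [M HM].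
        specialize (HM (Nat.max m M) ltac:(lia)). specialize (Hm (Nat.max m M) ltac:(lia)). lra.
  - exists (fun m x => exists n, (m <= n)%nat /\ 1/2 < ratio A (restr x n)). split.
    + intro m. apply (is_open_restr_witness _ (fun n t => (m <= n)%nat /\ 1/2 < ratio A t));
        [intros x [n Hn]|intros x n Hn]; eauto.
    + intro x. split.
      * intros Ax m. destruct (D1 x Ax) as [M HM]. exists (Nat.max m M).
        split; [lia|]. apply HM; lia.
      * intro Hm. apply NNPP; intro Ax. destruct (D0 x Ax) as [M HM].
        destruct (Hm M) as [n [Hn Hr]]. specialize (HM n Hn). lra.
Qed.

Lemma ratio_full X s : (forall y, N s y -> X y) -> ratio X s = 1.
Proof.
  intro H. unfold ratio. rewrite (outer_ext (inter X (N s)) (N s)).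
  - pose proof (outer_N s). pose proof (weight_pos s). field. lra.
  - intro y; unfold inter; split; [tauto|]. intro; split; auto.
Qed.

Lemma ratio_zero X s : (forall y, N s y -> ~ X y) -> ratio X s = 0.
Proof.
  intro H. unfold ratio. rewrite outer_empty; [unfold Rdiv; ring|].
  intros y [Hx Hy]. eapply H; eauto.
Qed.

Lemma ratio_le_half X s t :
  (forall y, X y -> N s y -> N t y) -> length t = S (length s) -> ratio X s <= 1/2.
Proof.
  intros H E. unfold ratio. rewrite outer_N.
  assert (outer (inter X (N s)) <= weight t) by (apply outer_le_weight; intros y [H1 H2]; auto).
  assert (weight t = weight s / 2)
    by (unfold weight; rewrite E; simpl; rewrite Rinv_mult; unfold Rdiv; ring).
  pose proof (weight_pos s). apply Rmult_le_reg_r with (weight s); auto.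
  unfold Rdiv. rewrite Rmult_assoc, Rinv_l; lra.
Qed.

Lemma density_at_open U x : is_open U -> U x -> density_at U x 1.
Proof.
  intros HU Ux eps He. destruct (HU x Ux) as [n Hn]. exists n. intros m Hm.
  change (R_dist (ratio U (restr x m)) 1 < eps).
  rewrite ratio_full; [rewrite R_dist_eq; auto|].
  intros y Hy. apply Hn.
  apply (N_restr_sub _ x y m); [apply N_restr|rewrite length_restr; lia|auto].
Qed.

Lemma not_cv_1_often_le_half (u : nat -> R) :
  (forall M, exists n, (n >= M)%nat /\ u n <= 1/2) -> ~ Un_cv u 1.
Proof.
  intros H Hc. destruct (Un_cv_near_half _ _ Hc) as [M HM].
  destruct (H M) as [n [Hn Hu]]. specialize (HM n Hn). lra.
Qed.

Lemma is_closed_N s : is_closed (N s).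
Proof.
  apply (is_open_restr_witness _ (fun n t => n = length s /\ t <> s)).
  - intros x Hx. exists (length s). split; auto. intro E. apply Hx, N_iff_restr, E.
  - intros x n [-> Hne] Hx. apply Hne, N_iff_restr, Hx.
Qed.

Definition cell (k : nat) : list bool := repeat false (2 * k) ++ [true].

Lemma N_cell k x :
  N (cell k) x <-> x (2 * k)%nat = true /\ forall i, (i < 2 * k)%nat -> x i = false.
Proof.
  assert (Hlast : nth (2 * k) (cell k) false = true).
  { unfold cell. rewrite app_nth2; rewrite repeat_length; [rewrite Nat.sub_diag|]; auto. }
  assert (Hfirst : forall i, (i < 2 * k)%nat -> nth i (cell k) false = false).
  { intros i Hi. unfold cell. rewrite app_nth1 by (rewrite repeat_length; auto).
    apply nth_repeat_lt; auto. }
  assert (Hlen : length (cell k) = S (2 * k)).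
  { unfold cell. rewrite length_app, repeat_length. simpl. lia. }
  unfold N. rewrite Hlen. split.
  - intro H. split; [rewrite <- H; auto|]. intros i Hi. rewrite <- H by lia. auto.
  - intros [H1 H2] i Hi. destruct (Nat.lt_ge_cases i (2 * k)).
    + rewrite Hfirst, H2; auto.
    + replace i with (2 * k)%nat by lia. rewrite Hlast; auto.
Qed.

Lemma cell_disjoint j k x : N (cell j) x -> N (cell k) x -> j = k.
Proof.
  rewrite !N_cell. intros [H1 H2] [H3 H4].
  destruct (Nat.lt_total j k) as [Hl|[He|Hl]]; auto.
  - rewrite H4 in H1; [discriminate|lia].
  - rewrite H2 in H3; [discriminate|lia].
Qed.

Definition first_one_even : cset := fun x => exists k, N (cell k) x.

Definition zero : Cantor := fun _ => false.

Lemma measurable_first_one_even : measurable first_one_even.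
Proof. apply measurable_disjoint_union; [intro; apply measurable_N|apply cell_disjoint]. Qed.

Lemma is_open_first_one_even : is_open first_one_even.
Proof.
  intros x [k Hk]. exists (length (cell k)). intros y Hy. exists k.
  apply (N_restr_sub _ x y (length (cell k))); auto.
Qed.

Lemma ratio_first_one_even_zero M : ratio first_one_even (restr zero (2 * M + 1)) <= 1/2.
Proof.
  apply (ratio_le_half _ _ (restr zero (2 * M + 2))); [|rewrite !length_restr; lia].
  intros y [k Hk] Hy. rewrite N_cell in Hk. destruct Hk as [Hk1 Hk2].
  rewrite N_restr_iff in *. intros j Hj.
  destruct (Nat.lt_ge_cases j (2 * M + 1)); [apply Hy; auto|].
  replace j with (2 * M + 1)%nat by lia.
  destruct (Nat.lt_ge_cases (2 * k) (2 * M + 1)).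
  - rewrite Hy in Hk1 by lia. discriminate.
  - apply Hk2. lia.
Qed.

Lemma ratio_compl_first_one_even_zero M :
  ratio (compl first_one_even) (restr zero (2 * M)) <= 1/2.
Proof.
  apply (ratio_le_half _ _ (restr zero (2 * M + 1))); [|rewrite !length_restr; lia].
  intros y Hy HN. rewrite N_restr_iff in *. intros j Hj.
  destruct (Nat.lt_ge_cases j (2 * M)); [apply HN; auto|].
  replace j with (2 * M)%nat by lia. unfold zero.
  destruct (y (2 * M)%nat) eqn:E; auto.
  exfalso. apply Hy. exists M. apply N_cell. split; auto.
Qed.

Lemma Phi_first_one_even : set_eq (Phi first_one_even) first_one_even.
Proof.
  intro x. split; [|apply density_at_open, is_open_first_one_even].
  intro Hd. apply NNPP; intro Hx. revert Hd.
  apply not_cv_1_often_le_half. intro M.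
  destruct (classic (exists i, x i = true)) as [Hi|Hi].
  - destruct (least_witness _ Hi) as [i [Hxi Hmin]].
    assert (Hbefore : forall j, (j < i)%nat -> x j = false)
      by (intros j Hj; destruct (x j) eqn:E; auto; exfalso; apply (Hmin j); auto).
    destruct (Nat.Even_or_Odd i) as [[k ->]|[k ->]].
    + exfalso. apply Hx. exists k. apply N_cell. auto.
    + exists (Nat.max M (2 * k + 2)). split; [lia|].
      change (ratio first_one_even (restr x (Nat.max M (2 * k + 2))) <= 1/2).
      rewrite ratio_zero; [lra|]. intros y Hy [k' Hk']. rewrite N_cell in Hk'.
      destruct Hk' as [Hk1 Hk2]. rewrite N_restr_iff in Hy.
      destruct (Nat.lt_total (2 * k') (2 * k + 1)) as [Hl|[He|Hl]]; [|lia|].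
      * rewrite Hy, Hbefore in Hk1 by lia. discriminate.
      * specialize (Hk2 (2 * k + 1)%nat Hl). rewrite Hy in Hk2 by lia. congruence.
  - assert (Hz : forall n, restr x n = restr zero n).
    { intro n. unfold restr. apply map_ext. intro i. unfold zero.
      destruct (x i) eqn:E; auto. exfalso; apply Hi; eauto. }
    exists (2 * M + 1)%nat. split; [lia|].
    change (ratio first_one_even (restr x (2 * M + 1)) <= 1/2).
    rewrite Hz. apply ratio_first_one_even_zero.
Qed.

Lemma Delta02_first_one_even : Delta02 first_one_even.
Proof.
  split.
  - exists (fun k => N (cell k)). split; [intro; apply is_closed_N|].
    intro x; unfold first_one_even; tauto.
  - exists (fun _ => first_one_even). split; [intro; apply is_open_first_one_even|].
    intro x. split; auto. intro H; apply (H 0%nat).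
Qed.

Lemma not_T_clopen_first_one_even : ~ T_clopen first_one_even.
Proof.
  intros [_ [_ Hc]].
  assert (Hz : compl first_one_even zero).
  { intros [k Hk]. apply N_cell in Hk. destruct Hk as [Hk _]. discriminate. }
  apply Hc in Hz. revert Hz. apply not_cv_1_often_le_half.
  intro M. exists (2 * M)%nat. split; [lia|]. apply ratio_compl_first_one_even_zero.
Qed.

Theorem corollary5p4 :
  (forall A : cset,
     (T_clopen A <-> exists B, dualistic B /\ set_eq A (Phi B)) /\
     (T_clopen A <-> in_ran_Phi A /\ dualistic A)) /\
  (forall A : cset, T_clopen A -> in_ran_Phi A /\ Delta02 A) /\
  (exists A : cset, in_ran_Phi A /\ Delta02 A /\ ~ T_clopen A).
Proof.
  assert (Hfix : forall A, T_clopen A -> set_eq A (Phi A))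
    by (intros A [_ [Hp _]] x; symmetry; apply Hp).
  assert (Hran : forall A, T_clopen A -> in_ran_Phi A)
    by (intros A HT; exists A; split; [apply HT|apply Hfix, HT]).
  split; [|split].
  - intro A. split; split.
    + intro HT. exists A. split; [apply dualistic_T_clopen|apply Hfix]; auto.
    + intros [B [HB HA]]. apply (T_clopen_Phi_dualistic A B HB HA).
    + intro HT. split; [apply Hran|apply dualistic_T_clopen]; auto.
    + intros [[B [HB HA]] HD]. apply (T_clopen_Phi_dualistic A A HD).
      intro x. symmetry. apply (Phi_fixed B A HB HA).
  - intros A HT. split; [apply Hran|apply Delta02_T_clopen]; auto.
  - exists first_one_even. split; [|split].
    + exists first_one_even. split; [apply measurable_first_one_even|].
      intro x; symmetry; apply Phi_first_one_even.
    + apply Delta02_first_one_even.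
    + apply not_T_clopen_first_one_even.
Qed.
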